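(* Let $f:\mathbb{R}^n\to\mathbb{R}$ be continuously differentiable and bounded below, with $\nabla f$ Lipschitz continuous on $\mathbb{R}^n$, and let $s$ be an integer with $0<s<n$. Then any optimal solution $\mathbf{x}^*$ of the problem (P): minimize $f(\mathbf{x})$ subject to $\|\mathbf{x}\|_0\le s$, is an $L_2(f)$-stationary point of (P), i.e. $\nabla_i f(\mathbf{x}^* )=0$ for $i\in I_1(\mathbf{x}^* )$ and $|\nabla_i f(\mathbf{x}^* )|\le L_2(f)M_s(\mathbf{x}^* )$ for $i\in I_0(\mathbf{x}^* )$.
   Context: $\|\mathbf{x}\|_0$ is the number of nonzero components; $I_1(\mathbf{x})=\{i:x_i\neq0\}$, $I_0(\mathbf{x})=\{i:x_i=0\}$; $M_s(\mathbf{x})$ is the $s$-th largest absolute value among the components of $\mathbf{x}$. For $i\neq j$, $\nabla_{i,j}f(\mathbf{x})\in\mathbb{R}^2$ is the vector of the $i$-th and $j$-th partial derivatives, and $L_{i,j}(f)$ is a constant with $\|\nabla_{i,j}f(\mathbf{x})-\nabla_{i,j}f(\mathbf{x}+\mathbf{d})\|\le L_{i,j}(f)\|\mathbf{d}\|$ for all $\mathbf{x}$ and all $\mathbf{d}$ with at most two nonzero components; $L_2(f)=\max_{i\neq j}L_{i,j}(f)$. *)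

From HB Require Import structures.
From mathcomp Require Import all_boot all_order all_algebra.
From mathcomp Require Import all_classical all_reals all_analysis.
Set Implicit Arguments. Unset Strict Implicit. Unset Printing Implicit Defensive.
Import Order.TTheory GRing.Theory Num.Theory.
Import numFieldNormedType.Exports.
Local Open Scope ring_scope.

Definition evec (R : realType) (n : nat) (i : 'I_n) : 'rV[R]_n := delta_mx 0 i.

Definition partial (R : realType) (n : nat) (f : 'rV[R]_n -> R) (i : 'I_n)
  (x : 'rV[R]_n) : R := 'D_(evec R i) f x.

Definition grad (R : realType) (n : nat) (f : 'rV[R]_n -> R) (x : 'rV[R]_n)
  : 'rV[R]_n := \row_i partial f i x.

Definition enorm (R : realType) (n : nat) (v : 'rV[R]_n) : R :=
  Num.sqrt (\sum_(k < n) v 0 k ^+ 2).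

Definition l0norm (R : realType) (n : nat) (x : 'rV[R]_n) : nat :=
  #|[set i : 'I_n | x 0 i != 0]|.

(* M_s(x): s-th largest absolute value among the components (with multiplicity), s >= 1 *)
Definition Ms (R : realType) (n : nat) (s : nat) (x : 'rV[R]_n) : R :=
  nth 0 (sort (fun a b : R => b <= a) [seq `|x 0 i| | i <- enum 'I_n]) s.-1.

Definition optimal_P (R : realType) (n : nat) (f : 'rV[R]_n -> R) (s : nat)
  (x : 'rV[R]_n) : Prop :=
  (l0norm x <= s)%N /\ forall y : 'rV[R]_n, (l0norm y <= s)%N -> f x <= f y.

(* L is a constant valid for L_{i,j}(f): for all x and all d supported on {i,j},
   || grad_{i,j} f(x) - grad_{i,j} f(x+d) ||_2 <= L ||d||_2 *)
Definition block_lip_const (R : realType) (n : nat) (f : 'rV[R]_n -> R)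
  (i j : 'I_n) (L : R) : Prop :=
  forall x d : 'rV[R]_n,
    (forall k : 'I_n, k != i -> k != j -> d 0 k = 0) ->
    Num.sqrt ((partial f i x - partial f i (x + d)) ^+ 2
              + (partial f j x - partial f j (x + d)) ^+ 2)
      <= L * enorm d.

From HB Require Import structures.
From mathcomp Require Import all_boot all_order all_algebra.
From mathcomp Require Import all_classical all_reals all_analysis.
From mathcomp Require Import ring lra zify.
Import Order.TTheory GRing.Theory Num.Theory.
Import numFieldNormedType.Exports.
Local Open Scope ring_scope.

(* Let x be optimal and perturb only two coordinates i and j.  The block
   Lipschitz constant L_2(f) yields the descent bound
     f(x + a e_i + b e_j) <= f(x) + a d_i f(x) + b d_j f(x) + L_2/2 (a^2 + b^2),
   so whenever the perturbed point is still s-sparse, optimality makes this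
   quadratic in (a, b) nonnegative, which bounds |d_i f(x)| by L_2 |b| once
   d_j f(x) = 0.  Moving a support coordinate (or any coordinate when
   ||x||_0 < s) with b = 0 gives d_i f(x) = 0; when ||x||_0 = s, moving a zero
   coordinate i while zeroing a support coordinate j with |x_j| = M_s(x)
   gives |d_i f(x)| <= L_2 M_s(x). *)

Lemma cauchy_schwarz2 (R : rcfType) (p1 p2 q1 q2 : R) :
  p1 * q1 + p2 * q2 <= Num.sqrt (p1 ^+ 2 + p2 ^+ 2) * Num.sqrt (q1 ^+ 2 + q2 ^+ 2).
Proof.
rewrite -sqrtrM; last by rewrite addr_ge0 ?sqr_ge0.
have [h|h] := lerP (p1 * q1 + p2 * q2) 0; first exact: le_trans h (sqrtr_ge0 _).
rewrite -[leLHS](ger0_norm (ltW h)) -sqrtr_sqr ler_sqrt; last first.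
  by rewrite mulr_ge0 // addr_ge0 ?sqr_ge0.
have := sqr_ge0 (p1 * q2 - p2 * q1); rewrite !expr2; nra.
Qed.

Lemma abs_le_of_quadratic_ge0 (R : realFieldType) (g L a : R) : 0 <= L ->
  (forall t : R, 0 <= t * g + L / 2 * (a ^+ 2 + t ^+ 2)) -> `|g| <= L * `|a|.
Proof.
move=> L0 quad_ge0; have g2_le : g ^+ 2 <= L ^+ 2 * a ^+ 2.
  have [L_eq0|L_neq0] := eqVneq L 0.
    by have := quad_ge0 (- g); rewrite L_eq0 !mul0r addr0 expr0n mul0r; nra.
  have := mulr_ge0 L0 (quad_ge0 (- g / L)).
  have : (- g / L) * L = - g by rewrite mulfVK.
  rewrite !expr2; nra.
rewrite -(ler_pXn2r (isT : (0 < 2)%N)) ?nnegrE ?mulr_ge0 //.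
by rewrite exprMn !real_normK ?num_real.
Qed.

Lemma exists_neq_ord {n : nat} (i : 'I_n) : (1 < n)%N -> exists j : 'I_n, i != j.
Proof.
move=> n_gt1; have /card_gt0P[j] : (0 < #|[set~ i]|)%N by rewrite cardsC1 card_ord; lia.
by rewrite !inE eq_sym; exists j.
Qed.

Definition evec2 {R : realType} {n : nat} (i j : 'I_n) (a b : R) : 'rV[R]_n :=
  a *: evec R i + b *: evec R j.

Section Evec2.
Context {R : realType} {n : nat} {i j : 'I_n}.

Lemma evec2E (a b : R) (k : 'I_n) :
  evec2 i j a b 0 k = a * (k == i)%:R + b * (k == j)%:R.
Proof. by rewrite !mxE. Qed.

Lemma evec2_out (a b : R) (k : 'I_n) : k != i -> k != j -> evec2 i j a b 0 k = 0.
Proof. by move=> /negbTE ki /negbTE kj; rewrite evec2E ki kj !mulr0 addr0. Qed.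

Lemma evec2Z (t a b : R) : t *: evec2 i j a b = evec2 i j (t * a) (t * b).
Proof. by rewrite scalerDr !scalerA. Qed.

Lemma enorm_evec2 (a b : R) : i != j ->
  enorm (evec2 i j a b) = Num.sqrt (a ^+ 2 + b ^+ 2).
Proof.
move=> ij; rewrite /enorm (bigD1 i) //= (bigD1 j) 1?eq_sym //=.
rewrite big1 ?addr0 => [|k /andP[ki kj]]; last by rewrite evec2_out // expr0n.
by rewrite !evec2E !eqxx (negbTE ij) eq_sym (negbTE ij) !mulr0 !mulr1 addr0 add0r.
Qed.

Lemma block_lip_const_ge0 (f : 'rV[R]_n -> R) (L : R) :
  i != j -> block_lip_const f i j L -> 0 <= L.
Proof.
move=> ij /(_ 0 (evec2 i j 1 0) (evec2_out 1 0)).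
rewrite enorm_evec2 // expr1n expr0n addr0 sqrtr1 mulr1.
exact: le_trans (sqrtr_ge0 _).
Qed.

End Evec2.

Section BlockDescent.
Context {R : realType} {n : nat} {f : 'rV[R]_n -> R}.
Hypothesis f_diff : forall x : 'rV[R]_n, differentiable f x.

Let line (x d : 'rV[R]_n) (s : R) := f (x + s *: d).

Lemma line_diff_quotientE (x d : 'rV[R]_n) (t : R) :
  (fun h : R => h^-1 *: ((line x d \o shift t) (h *: 1) - line x d t)) =
  (fun h : R => h^-1 *: ((f \o shift (x + t *: d)) (h *: d) - f (x + t *: d))).
Proof.
apply/funext => h; rewrite /line /= scalerDl [h *: 1]mulr1.
by rewrite addrCA.
Qed.

Lemma derivable_line (x d : 'rV[R]_n) (t : R) : derivable (line x d) t 1.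
Proof. by rewrite /derivable line_diff_quotientE; exact: diff_derivable. Qed.

Lemma derive_line (x d : 'rV[R]_n) (t : R) :
  'D_1 (line x d) t = 'D_d f (x + t *: d).
Proof. by rewrite /derive line_diff_quotientE. Qed.

Lemma derive_evec2 (y : 'rV[R]_n) (i j : 'I_n) (a b : R) :
  'D_(evec2 i j a b) f y = a * partial f i y + b * partial f j y.
Proof. by rewrite /evec2 /partial !deriveE // linearD !linearZ. Qed.

Context {L2 : R}.
Hypothesis f_lip2 : forall i j : 'I_n, i != j -> block_lip_const f i j L2.

Lemma derive_evec2_incr_le (x : 'rV[R]_n) (i j : 'I_n) (a b t : R) : i != j -> 0 <= t ->
  'D_(evec2 i j a b) f (x + t *: evec2 i j a b) - 'D_(evec2 i j a b) f x
    <= L2 * t * (a ^+ 2 + b ^+ 2).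
Proof.
move=> ij t0; set d := evec2 i j a b; rewrite !derive_evec2.
set ui := partial f i x - partial f i (x + t *: d).
set uj := partial f j x - partial f j (x + t *: d).
set c := a ^+ 2 + b ^+ 2; have c0 : 0 <= c by rewrite addr_ge0 ?sqr_ge0.
have lip : Num.sqrt (ui ^+ 2 + uj ^+ 2) <= L2 * (t * Num.sqrt c).
  have := @f_lip2 i j ij x _ (evec2_out (t * a) (t * b)).
  rewrite enorm_evec2 // -evec2Z !exprMn -mulrDr sqrtrM ?sqr_ge0 //.
  by rewrite sqrtr_sqr ger0_norm.
have cs := cauchy_schwarz2 _ (- a) (- b) ui uj; rewrite !sqrrN -/c in cs.
have -> : L2 * t * c = Num.sqrt c * (L2 * (t * Num.sqrt c)).
  by rewrite -[c in LHS](sqr_sqrtr c0); ring.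
have -> : a * partial f i (x + t *: d) + b * partial f j (x + t *: d)
    - (a * partial f i x + b * partial f j x) = - a * ui + - b * uj.
  by rewrite /ui /uj; ring.
exact: le_trans cs (ler_wpM2l (sqrtr_ge0 c) lip).
Qed.

Lemma descent_evec2 (x : 'rV[R]_n) (i j : 'I_n) (a b : R) : i != j ->
  f (x + evec2 i j a b) <=
  f x + (a * partial f i x + b * partial f j x) + L2 / 2 * (a ^+ 2 + b ^+ 2).
Proof.
move=> ij; set d := evec2 i j a b; set k := L2 / 2 * _.
set g0 := a * partial f i x + b * partial f j x.
pose q (s : R) := g0 * s + k * (s * s).
have q' (t : R) : is_derive t 1 q (g0 + k * (t + t)).
  by apply: is_derive_eq; rewrite /GRing.scale /= !mulr1.
(* The gap between f along the segment and its quadratic model is nonincreasing. *)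
pose phi := line x d \- q.
have phi'_ok (t : R) : derivable phi t 1 /\
    'D_1 phi t = 'D_d f (x + t *: d) - (g0 + k * (t + t)).
  split; first exact: derivableB (derivable_line x d t) _.
  have qt := q' t; rewrite deriveB ?derive_line ?derive_val //; exact: derivable_line.
have : phi 1 <= phi 0.
  apply: (@ler0_derive1_le_cc R phi 0 1) => //; rewrite ?in_itv /= ?lexx ?ler01 //.
  - by move=> t _; exact: (phi'_ok t).1.
  - move=> t; rewrite in_itv /= => /andP[t0 _]; rewrite derive1E (phi'_ok t).2.
    have := @derive_evec2_incr_le x i j a b t ij (ltW t0).
    have -> : k * (t + t) = L2 * t * (a ^+ 2 + b ^+ 2) by rewrite /k; field.
    rewrite /d !derive_evec2 -/g0; lra.
  - apply: continuous_subspaceT => t.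
    by apply: differentiable_continuous; apply/derivable1_diffP; exact: (phi'_ok t).1.
rewrite /phi /line /q /= scale1r scale0r addr0 !mulr0 !mulr1 addr0 subr0; lra.
Qed.

End BlockDescent.

Section SortedAbs.
Context {R : realType} {n : nat}.
Implicit Types (x y : 'rV[R]_n) (i j : 'I_n).

Let abs_sorted x := sort (fun a b : R => b <= a) [seq `|x 0 k| | k <- enum 'I_n].

Lemma l0norm_abs_sorted x : l0norm x = count (fun v : R => v != 0) (abs_sorted x).
Proof.
rewrite (permP (permEl (perm_sort _ _))) count_map /l0norm cardsE cardE.
rewrite /enum_mem size_filter count_filter.
by apply: eq_count => k /=; rewrite normr_eq0 andbT.
Qed.

Lemma Ms_neq0 (s : nat) x : (0 < s)%N -> (s <= l0norm x)%N -> Ms s x != 0.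
Proof.
move=> s0 sx; apply/eqP => M0.
set srt := abs_sorted x; have Mdef : Ms s x = nth 0 srt s.-1 by [].
have srt_sorted : sorted (fun a b : R => b <= a) srt.
  by apply: sort_sorted => a b; exact: le_total.
have srt_ge0 v : v \in srt -> 0 <= v by rewrite mem_sort => /mapP[k _ ->].
have tail0 : count (fun v : R => v != 0) (drop s.-1 srt) = 0%N.
  apply/eqP; rewrite -leqn0 leqNgt -has_count; apply/hasPn => v /(nthP 0)[m].
  rewrite size_drop nth_drop => lt_m <-.
  have lt_sm : (s.-1 + m < size srt)%N by rewrite -ltn_subRL.
  have lt_s : (s.-1 < size srt)%N by apply: leq_ltn_trans lt_sm; exact: leq_addr.
  rewrite negbK eq_le srt_ge0 ?mem_nth // andbT -[leRHS]M0 Mdef.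
  by apply: (sorted_leq_nth (rev_trans le_trans) lexx); rewrite ?inE ?leq_addr.
have l0_take : l0norm x = count (fun v : R => v != 0) (take s.-1 srt).
  by rewrite l0norm_abs_sorted -/srt -{1}(cat_take_drop s.-1 srt) count_cat tail0 addn0.
have := count_size (fun v : R => v != 0) (take s.-1 srt).
rewrite size_take_min -l0_take => /leq_trans/(_ (geq_minl _ _)).
by move: sx; lia.
Qed.

Lemma Ms_witness (s : nat) x : (0 < s)%N -> (s <= l0norm x)%N ->
  exists2 j, x 0 j != 0 & `|x 0 j| = Ms s x.
Proof.
move=> s0 sx; have M0 := Ms_neq0 _ _ s0 sx.
have : Ms s x \in abs_sorted x.
  by apply: mem_nth; rewrite ltnNge; apply: contra M0 => big; rewrite /Ms nth_default.
rewrite mem_sort => /mapP[j _ Mj]; exists j => //.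
by apply: contra M0 => /eqP xj0; rewrite Mj xj0 normr0.
Qed.

Lemma Ms_ge0 (s : nat) x : 0 <= Ms s x.
Proof.
change (0 <= nth 0 (abs_sorted x) s.-1).
have [lt_s|ge_s] := ltnP s.-1 (size (abs_sorted x)); last by rewrite nth_default.
by have := mem_nth 0 lt_s; rewrite mem_sort => /mapP[k _ ->].
Qed.

End SortedAbs.

Section Support.
Context {R : realType} {n : nat}.
Implicit Types (x y : 'rV[R]_n) (i j : 'I_n).

Let supp x := [set k | x 0 k != 0].

Lemma l0norm_update x y i : (forall k, k != i -> y 0 k = x 0 k) ->
  (l0norm y <= l0norm x + (x 0%R i == 0%R))%N.
Proof.
move=> yx; have : supp y \subset i |: supp x.
  by apply/fintype.subsetP => k; rewrite !inE; have [//|/yx->] := eqVneq k i.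
by move/subset_leq_card; rewrite cardsU1 inE negbK addnC.
Qed.

Lemma l0norm_swap x y i j : (forall k, k != i -> k != j -> y 0 k = x 0 k) ->
  y 0 j = 0 -> x 0 j != 0 -> (l0norm y <= l0norm x)%N.
Proof.
move=> yx yj0 xj0; have : supp y \subset i |: (supp x :\ j).
  apply/fintype.subsetP => k; rewrite !inE.
  have [//|ki] := eqVneq k i; have [->|kj] := eqVneq k j; first by rewrite yj0 eqxx.
  by rewrite yx.
move/subset_leq_card; rewrite cardsU1 => le_y.
change (#|supp y| <= #|supp x|)%N; rewrite (cardsD1 j (supp x)) inE xj0.
by move: le_y; case: (i \notin _) => /=; lia.
Qed.

End Support.



Section Optimality.
Context {R : realType} {n : nat} {f : 'rV[R]_n -> R} {s : nat} {L2 : R} {xs : 'rV[R]_n}.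
Hypothesis f_diff : forall x : 'rV[R]_n, differentiable f x.
Hypothesis f_lip2 : forall i j : 'I_n, i != j -> block_lip_const f i j L2.
Hypothesis n_gt1 : (1 < n)%N.
Hypothesis xs_opt : optimal_P f s xs.

Lemma block_lip_ge0 : 0 <= L2.
Proof.
have [j ij] := exists_neq_ord (Ordinal (ltnW n_gt1)) n_gt1.
exact: block_lip_const_ge0 _ _ ij (f_lip2 _ _ ij).
Qed.

Lemma optimal_quadratic_ge0 (i j : 'I_n) (a b : R) : i != j ->
  (l0norm (xs + evec2 i j a b) <= s)%N ->
  0 <= a * partial f i xs + b * partial f j xs + L2 / 2 * (a ^+ 2 + b ^+ 2).
Proof.
move=> ij /xs_opt.2 le_f; have := descent_evec2 f_diff f_lip2 xs i j a b ij.
by move: le_f; lra.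
Qed.

Lemma optimal_partial_eq0 (i : 'I_n) : (xs 0 i != 0) || (l0norm xs < s)%N ->
  partial f i xs = 0.
Proof.
move=> free_i; have [j ij] := exists_neq_ord i n_gt1.
suff : `|partial f i xs| <= L2 * `|0 : R| by rewrite normr0 mulr0 normr_le0 => /eqP.
apply: abs_le_of_quadratic_ge0 block_lip_ge0 _ => t.
have := @optimal_quadratic_ge0 i j t 0 ij.
rewrite mul0r addr0 expr0n addr0 add0r mulrC; apply.
have yx k : k != i -> (xs + evec2 i j t 0) 0 k = xs 0 k.
  by move=> /negbTE ki; rewrite mxE evec2E ki !mul0r mulr0 !addr0.
have := l0norm_update _ _ _ yx; have [l0_le _] := xs_opt.
case/orP: free_i => [/negbTE-> | lt_s]; first by rewrite addn0 => /leq_trans; apply.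
by case: (_ == _); lia.
Qed.

Lemma optimal_partial_le (i j : 'I_n) : xs 0 i = 0 -> xs 0 j != 0 ->
  `|partial f i xs| <= L2 * `|xs 0 j|.
Proof.
move=> xi0 xj0; have ij : i != j by apply: contraNneq xj0 => <-; rewrite xi0.
have gj0 : partial f j xs = 0 by apply: optimal_partial_eq0; rewrite xj0.
apply: abs_le_of_quadratic_ge0 block_lip_ge0 _ => t.
have := @optimal_quadratic_ge0 i j t (- xs 0 j) ij.
rewrite gj0 mulr0 addr0 sqrrN [t ^+ 2 + _]addrC; apply; apply: leq_trans xs_opt.1.
apply: (l0norm_swap _ _ i j) xj0 => [k /negbTE ki /negbTE kj|].
  by rewrite mxE evec2E ki kj !mulr0 !addr0.
by rewrite mxE evec2E eqxx eq_sym (negbTE ij) mulr0 mulr1 add0r subrr.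
Qed.

End Optimality.

Theorem corollary2p2 (R : realType) (n s : nat) (f : 'rV[R]_n -> R)
  (hdiff : forall x : 'rV[R]_n, differentiable f x)
  (hC1 : continuous (grad f))
  (hbdd : exists m : R, forall x : 'rV[R]_n, m <= f x)
  (hlip : exists L : R, forall x y : 'rV[R]_n,
            enorm (grad f x - grad f y) <= L * enorm (x - y))
  (hs0 : (0 < s)%N) (hsn : (s < n)%N)
  (L2 : R)
  (hL2 : forall i j : 'I_n, i != j -> block_lip_const f i j L2)
  (xs : 'rV[R]_n) (hopt : optimal_P f s xs) :
  (forall i : 'I_n, xs 0 i != 0 -> partial f i xs = 0) /\
  (forall i : 'I_n, xs 0 i = 0 -> `|partial f i xs| <= L2 * Ms s xs).
Proof.
have n_gt1 : (1 < n)%N by apply: leq_ltn_trans hsn.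
have eq0 := optimal_partial_eq0 hdiff hL2 n_gt1 hopt.
split=> [i xi0 | i xi0]; first by rewrite eq0 ?xi0.
have [lt_s | ge_s] := ltnP (l0norm xs) s.
  rewrite eq0 ?lt_s ?orbT // normr0 mulr_ge0 ?Ms_ge0 //.
  exact: block_lip_ge0 hL2 n_gt1.
have [j xj0 <-] := Ms_witness _ _ hs0 ge_s.
exact: optimal_partial_le hdiff hL2 n_gt1 hopt i j xi0 xj0.
Qed.
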